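(* Let $\gamma$ be a gauge on $\mathbb{R}^d$ with skewness $\sigma$, let $(D,w)$ and $(C,v)$ be finite positively weighted sets with $\sigma v_C<w_D$, and let $x$ be a Fermat–Weber point of $(D,w)+(C,v)$. Then there exist $e\in\mathbb{R}^d$ and $w_e\in(0,w_D/\sigma)$ such that $x$ is a Fermat–Weber point of $(D,w)+(e,w_e)$.
   Context: A gauge $\gamma$ on $\mathbb{R}^d$ is the Minkowski functional of a convex compact set $B_\gamma$ with the origin in its interior (not necessarily symmetric); its skewness is $\sigma=\sup_{x\ne0}\gamma(x)/\gamma(-x)$. For a weighted set, $w_D=\sum_{d\in D}w_d$. $(D,w)+(C,v)$ denotes $D\cup C$ with weight $w_x+v_x$ at $x$ (zero weight outside the respective set). A Fermat–Weber point of a finite positively weighted set $(S,u)$ is a minimizer of $x\mapsto\sum_{s\in S}u_s\gamma(x-s)$. *)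

From mathcomp Require Import all_boot all_order all_algebra.
From mathcomp Require Import all_classical all_reals all_analysis.
Set Implicit Arguments. Unset Strict Implicit. Unset Printing Implicit Defensive.
Import Order.TTheory GRing.Theory Num.Theory.
Import numFieldNormedType.Exports.
Local Open Scope classical_set_scope.
Local Open Scope ring_scope.

Definition gauge_body {R : realType} {d : nat} (B : set 'rV[R]_d) : Prop :=
  [/\ (forall x y (t : R), 0 <= t <= 1 -> B x -> B y -> B (t *: x + (1 - t) *: y)),
      compact B &
      nbhs (0 : 'rV[R]_d) B].

Definition gauge_of {R : realType} {d : nat} (B : set 'rV[R]_d) (x : 'rV[R]_d) : R :=
  inf [set t : R | 0 < t /\ B (t^-1 *: x)].

Definition skewness {R : realType} {d : nat} (gamma : 'rV[R]_d -> R) : R :=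
  sup [set gamma x / gamma (- x) | x in [set x : 'rV[R]_d | x != 0]].

Definition pos_wset {R : realType} {d : nat} (S : set 'rV[R]_d) (u : 'rV[R]_d -> R) : Prop :=
  finite_set S /\ (forall s, S s -> 0 < u s).

Definition wtotal {R : realType} {d : nat} (S : set 'rV[R]_d) (u : 'rV[R]_d -> R) : R :=
  (\sum_(s \in S) u s)%R.

Definition wsum_set {R : realType} {d : nat} (D C : set 'rV[R]_d) : set 'rV[R]_d := D `|` C.
Definition wsum_weight {R : realType} {d : nat} (D : set 'rV[R]_d) (w : 'rV[R]_d -> R)
  (C : set 'rV[R]_d) (v : 'rV[R]_d -> R) (x : 'rV[R]_d) : R :=
  (if `[< D x >] then w x else 0) + (if `[< C x >] then v x else 0).

Definition fw_obj {R : realType} {d : nat} (gamma : 'rV[R]_d -> R)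
  (S : set 'rV[R]_d) (u : 'rV[R]_d -> R) (x : 'rV[R]_d) : R :=
  (\sum_(s \in S) u s * gamma (x - s))%R.

Definition is_FW_point {R : realType} {d : nat} (gamma : 'rV[R]_d -> R)
  (S : set 'rV[R]_d) (u : 'rV[R]_d -> R) (x : 'rV[R]_d) : Prop :=
  forall y, fw_obj gamma S u x <= fw_obj gamma S u y.

From mathcomp Require Import all_boot all_order all_algebra.
From mathcomp Require Import all_classical all_reals all_analysis.
From mathcomp Require Import lra ring.
Set Implicit Arguments.
Import Order.TTheory GRing.Theory Num.Theory.
Import numFieldNormedType.Exports.
Local Open Scope classical_set_scope.
Local Open Scope ring_scope.

(* Write f_S for the Fermat-Weber objective of a weighted set S.
   The point e is taken to be x itself.  Since the gauge gamma is subadditive,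
   f_C(y) <= f_C(x) + v_C * gamma(y - x) for every y, so optimality of x for
   (D,w)+(C,v), i.e. f_D(x) + f_C(x) <= f_D(y) + f_C(y), gives
       f_D(x) <= f_D(y) + v_C * gamma(y - x),
   which says that x is a Fermat-Weber point of (D,w)+(x,w_e) for every
   w_e >= v_C (the added term vanishes at x because gamma(0) = 0).  The
   hypothesis sigma v_C < w_D, together with sigma > 0, leaves room for such a
   w_e strictly below w_D / sigma. *)

Section Gauge.
Variables (R : realType) (d : nat) (B : set 'rV[R]_d).
Hypothesis gB : gauge_body B.

Lemma body_contains_ball : exists2 r : R, 0 < r & forall y, `|y| < r -> B y.
Proof.
case: gB => _ _ /nbhs_ballP [r r0 rB]; exists r => // y yr; apply: rB.
by rewrite -ball_normE /= sub0r normrN.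
Qed.

Lemma body_bounded : exists2 M : R, 0 < M & forall y, B y -> `|y| <= M.
Proof.
case: gB => _ /compact_bounded [M [_ HM]] _.
exists (Num.max M 0 + 1); first by rewrite ltr_pwDr // le_max lexx orbT.
by apply: HM; rewrite ltr_pwDr // le_max lexx.
Qed.

Lemma gauge_le (u : 'rV[R]_d) (t : R) :
  0 < t -> B (t^-1 *: u) -> gauge_of B u <= t.
Proof. by move=> t0 Bt; apply: ge_inf => //; exists 0 => s [s0 _]; exact: ltW. Qed.

Lemma gauge_le_norm :
  exists2 r : R, 0 < r & forall u, u != 0 -> gauge_of B u <= 2 * `|u| / r.
Proof.
have [r r0 rB] := body_contains_ball; exists r => // u u0.
have n0 : 0 < `|u| by rewrite normr_gt0.
apply: gauge_le; first by rewrite divr_gt0 // mulr_gt0.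
apply: rB; rewrite normrZ ger0_norm ?invr_ge0 ?divr_ge0 ?mulr_ge0 ?ltW //.
rewrite invf_div mulrAC ltr_pdivrMr ?mulr_gt0 // ltr_pM2l //; lra.
Qed.

Lemma gauge_set_nonempty (u : 'rV[R]_d) : exists t : R, 0 < t /\ B (t^-1 *: u).
Proof.
have [r r0 rB] := body_contains_ball.
have t0 : 0 < 2 * (`|u| + 1) / r by rewrite divr_gt0 // mulr_gt0 // ltr_wpDl.
exists (2 * (`|u| + 1) / r); split => //; apply: rB.
rewrite normrZ ger0_norm ?invr_ge0 ?ltW // invf_div mulrAC ltr_pdivrMr; last first.
  by rewrite mulr_gt0 // ltr_wpDl.
rewrite ltr_pM2l //; have := normr_ge0 u; lra.
Qed.

Lemma gauge_has_inf (u : 'rV[R]_d) : has_inf [set t : R | 0 < t /\ B (t^-1 *: u)].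
Proof.
split; first by have [t ?] := gauge_set_nonempty u; exists t.
by exists 0 => s [s0 _]; exact: ltW.
Qed.

Lemma gauge_ge (u : 'rV[R]_d) (a : R) :
  (forall t, 0 < t -> B (t^-1 *: u) -> a <= t) -> a <= gauge_of B u.
Proof. by move=> H; apply: lb_le_inf => [|s [s0 Bs]]; [case: (gauge_has_inf u)|apply: H]. Qed.

Lemma gauge_ge0 (u : 'rV[R]_d) : 0 <= gauge_of B u.
Proof. by apply: gauge_ge => t t0 _; apply: ltW. Qed.

Lemma gauge0 : gauge_of B 0 = 0.
Proof.
apply/eqP; rewrite eq_le gauge_ge0 andbT.
have [r r0 rB] := body_contains_ball.
apply/ler_addgt0Pr => e e0; rewrite add0r; apply: gauge_le => //.
by rewrite scaler0; apply: rB; rewrite normr0.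
Qed.

Lemma gauge_ge_norm : exists2 M : R, 0 < M & forall u, `|u| / M <= gauge_of B u.
Proof.
have [M M0 HM] := body_bounded; exists M => // u.
apply: gauge_ge => t t0 Bt; have := HM _ Bt.
rewrite normrZ ger0_norm ?invr_ge0 ?(ltW t0) // ler_pdivrMr //.
by rewrite mulrC ler_pdivrMr // mulrC.
Qed.

(* Convexity of the body makes the gauge subadditive: if u/a and v/b lie in B,
   then (u+v)/(a+b) is the convex combination a/(a+b) u/a + b/(a+b) v/b. *)
Lemma gauge_subadditive (u v : 'rV[R]_d) :
  gauge_of B (u + v) <= gauge_of B u + gauge_of B v.
Proof.
have [cvx _ _] := gB.
apply/ler_addgt0Pr => e e0.
have e20 : 0 < e / 2 by rewrite divr_gt0.
have [a [a0 Ba] ha] := inf_adherent e20 (gauge_has_inf u).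
have [b [b0 Bb] hb] := inf_adherent e20 (gauge_has_inf v).
apply: (@le_trans _ _ (a + b)); last by rewrite /gauge_of; lra.
have ab0 : 0 < a + b by rewrite addr_gt0.
apply: gauge_le => //.
have t01 : 0 <= a / (a + b) <= 1 by rewrite divr_ge0 ?ltW //= ltr_pdivrMr // mul1r; lra.
have := cvx _ _ _ t01 Ba Bb.
congr B; rewrite !scalerA scalerDr; congr (_ *: _ + _ *: _).
  by field; rewrite !gt_eqF.
rewrite -[X in X - _](divff (lt0r_neq0 ab0)) -mulrBl addrAC subrr add0r.
by rewrite mulrAC divff ?gt_eqF // mul1r.
Qed.

(* In positive dimension the skewness is a positive real: the ratios
   gamma(u)/gamma(-u) are positive and bounded by 2M/r. *)
Lemma skewness_gt0 : (0 < d)%N -> 0 < skewness (gauge_of B).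
Proof.
move=> d0; have [r r0 Hr] := gauge_le_norm; have [M M0 HM] := gauge_ge_norm.
set S := [set gauge_of B x / gauge_of B (- x) | x in [set x : 'rV[R]_d | x != 0]].
have gpos u : u != 0 -> 0 < gauge_of B u.
  by move=> u0; apply: lt_le_trans (HM u); rewrite divr_gt0 // normr_gt0.
have S_ub : ubound S (2 * M / r).
  move=> z [u /= u0 <-]; have nu0 : - u != 0 by rewrite oppr_eq0.
  rewrite ler_pdivrMr ?gpos //; apply: le_trans (Hr u u0) _.
  apply: le_trans (ler_wpM2l _ (HM (- u))); last by rewrite divr_ge0 ?mulr_ge0 ?ltW.
  by rewrite normrN le_eqVlt; apply/orP; left; apply/eqP; field; rewrite !lt0r_neq0.
pose u : 'rV[R]_d := const_mx 1.
have u0 : u != 0.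
  apply/eqP => /matrixP /(_ 0 (Ordinal d0)); rewrite !mxE => /eqP.
  by rewrite oner_eq0.
have Su : S (gauge_of B u / gauge_of B (- u)) by exists u.
apply: lt_le_trans (ub_le_sup (ex_intro _ _ S_ub) Su).
by rewrite divr_gt0 ?gpos // oppr_eq0.
Qed.

End Gauge.

Section FermatWeber.
Variables (R : realType) (d : nat) (g : 'rV[R]_d -> R).

Lemma fsum_restrict (S T : set 'rV[R]_d) (u F : 'rV[R]_d -> R) :
  \sum_(s \in S `|` T) (if `[< S s >] then u s else 0) * F s =
  \sum_(s \in S) u s * F s.
Proof.
transitivity (\sum_(s \in S) (if `[< S s >] then u s else 0) * F s).
  apply/esym/fsbig_widen; first by move=> ?; left.
  by move=> s [_ nSs] /=; rewrite asboolF // mul0r.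
by apply: eq_fsbigr => s; rewrite inE => Ss; rewrite asboolT.
Qed.

Lemma fw_obj_wsum (D C : set 'rV[R]_d) (w v : 'rV[R]_d -> R) (y : 'rV[R]_d) :
  finite_set D -> finite_set C ->
  fw_obj g (wsum_set D C) (wsum_weight D w C v) y = fw_obj g D w y + fw_obj g C v y.
Proof.
move=> Df Cf; rewrite /fw_obj /wsum_set /wsum_weight.
under eq_fsbigr => s _ do rewrite mulrDl.
rewrite fsbig_split; last by rewrite finite_setU.
by rewrite fsum_restrict setUC fsum_restrict.
Qed.

Hypothesis g_subadditive : forall u v, g (u + v) <= g u + g v.

(* Moving the evaluation point from x to y costs at most the total weight
   times gamma(y - x), by the triangle inequality y - s = (y - x) + (x - s). *)
Lemma fw_obj_move (C : set 'rV[R]_d) (v : 'rV[R]_d -> R) (x y : 'rV[R]_d) :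
  finite_set C -> (forall s, C s -> 0 <= v s) ->
  fw_obj g C v y <= fw_obj g C v x + wtotal C v * g (y - x).
Proof.
move=> Cf vge0; rewrite /fw_obj /wtotal mulr_fsuml -fsbig_split //.
rewrite !fsbig_finite // big_seq [X in _ <= X]big_seq; apply: ler_sum => s.
rewrite in_fset_set // inE => Cs /=.
rewrite -mulrDr ler_wpM2l ?vge0 //.
have -> : y - s = (y - x) + (x - s) by rewrite addrA subrK.
by rewrite addrC g_subadditive.
Qed.

Hypotheses (g0 : g 0 = 0) (g_ge0 : forall u, 0 <= g u).

Lemma fw_point_absorb (D C : set 'rV[R]_d) (w v : 'rV[R]_d -> R) (x : 'rV[R]_d) (we : R) :
  finite_set D -> finite_set C -> (forall s, C s -> 0 <= v s) ->
  wtotal C v <= we ->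
  is_FW_point g (wsum_set D C) (wsum_weight D w C v) x ->
  is_FW_point g (wsum_set D [set x]) (wsum_weight D w [set x] (fun _ => we)) x.
Proof.
move=> Df Cf vge0 vle hFW y.
have opt := hFW y; rewrite !fw_obj_wsum // in opt.
have shift := @fw_obj_move C v x y Cf vge0.
have weight : wtotal C v * g (y - x) <= we * g (y - x) by rewrite ler_wpM2r.
rewrite !fw_obj_wsum ?finite_set1 // /fw_obj !fsbig_set1 subrr g0 mulr0 addr0.
rewrite /fw_obj in opt shift; lra.
Qed.

End FermatWeber.

Theorem mainTheorem18 (R : realType) (d : nat) (B : set 'rV[R]_d)
  (D : set 'rV[R]_d) (w : 'rV[R]_d -> R) (C : set 'rV[R]_d) (v : 'rV[R]_d -> R)
  (x : 'rV[R]_d) :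
  (0 < d)%N ->
  gauge_body B ->
  pos_wset D w -> pos_wset C v ->
  skewness (gauge_of B) * wtotal C v < wtotal D w ->
  is_FW_point (gauge_of B) (wsum_set D C) (wsum_weight D w C v) x ->
  exists (e : 'rV[R]_d) (we : R),
    0 < we /\ we < wtotal D w / skewness (gauge_of B) /\
    is_FW_point (gauge_of B) (wsum_set D [set e])
      (wsum_weight D w [set e] (fun _ => we)) x.
Proof.
move=> d0 gB [Df _] [Cf vpos] hsig hFW.
have sigma0 : 0 < skewness (gauge_of B) := skewness_gt0 gB d0.
have vge0 s : C s -> 0 <= v s by move=> Cs; exact/ltW/vpos.
have vC0 : 0 <= wtotal C v by apply: fsumr_ge0.
have vlt : wtotal C v < wtotal D w / skewness (gauge_of B).
  by rewrite ltr_pdivlMr // mulrC.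
set we := (wtotal C v + wtotal D w / skewness (gauge_of B)) / 2.
have vC_le_we : wtotal C v <= we by rewrite /we; lra.
exists x, we; split; first by rewrite /we; lra.
split; first by rewrite /we; lra.
exact: (fw_point_absorb (gauge_subadditive gB) (gauge0 gB) (gauge_ge0 gB)
  we Df Cf vge0 vC_le_we hFW).
Qed.
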